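(* Let $V$ be a finite set, $E\subset V\times V$ a set of directed edges without self-loops such that every vertex has at most one outgoing edge, and let real weights $\omega_v$ ($v\in V$), $\omega_{vw}$ ($v\ne w\in V$) and $B$ satisfy: (i) $\omega_v>\omega_{vw}$ for $(v,w)\in E$; (ii) $\omega_{uv}>\omega_{vw}$ whenever $(u,v),(v,w)\in E$; (iii) $\omega_{vw}=B$ whenever $v\neq w$, $(v,w)\notin E$ and $(w,v)\notin E$; (iv) $\omega_{vw}=\omega_{wv}$ for all $v\ne w$; (v) $B>\max\{\max_{v}\omega_v,\max_{(v,w)\in E}\omega_{vw}\}$. Let $S=\operatorname{conv}\{e_v:v\in V\}\subset\mathbb{R}^V$ (standard basis vectors) and let $\ell:S\to\mathbb{R}$ satisfy $\ell(e_v)=\omega_v$ for $v\in V$, $\ell(\tfrac12(e_v+e_w))=\omega_{vw}$ for $v\ne w$, and $\ell$ affine on each corner $S_v^{1/2}$, $v\in V$. Consider the conditional gradient iteration $$d_k=\operatorname{argmin}_{y\in S}\{\partial_{y-x_k}\ell(x_k)\}-x_k,\qquad x_{k+1}=x_k+\alpha_kd_k,$$ with either constant step $\alpha_k=1$, or exact line search $\alpha_k\in\operatorname{argmin}\{\ell(x_k+\alpha d_k):\alpha\ge0,\ x_k+\alpha d_k\in S\}$. Let $v_0,\dots,v_K\in V$ with $(v_k,v_{k+1})\in E$ for $k<K$ and $v_K$ without outgoing edge, and let $x_0=e_{v_0}$. (a) If $\alpha_k=1$ for all $k$, then the minimizers defining $d_k$ are unique for $k<K$ and $x_k=e_{v_k}$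 for $k=0,\dots,K$. (b) If in addition $\omega_v>\omega_{vw}>\omega_w$ for all $(v,w)\in E$, then for either choice of step size (constant $1$ or exact line search) we have $x_k=e_{v_k}$ for $k\le K$, $x_k=e_{v_K}$ for all $k>K$, and $\ell(x_k)=\omega_{v_k}$ with $\omega_{v_0}>\omega_{v_1}>\cdots>\omega_{v_K}$.
   Context: For $v\ne w$ and $0<\mu\le 1$, $e^\mu_{vw}=(1-\mu)e_v+\mu e_w$, and the corner $S_v^\mu=\operatorname{conv}(\{e_v\}\cup\{e^\mu_{vw}:w\ne v\})$. $\partial_{y-x}\ell(x)=\lim_{h\to0,h\ge 0}\frac1h[\ell(x+h(y-x))-\ell(x)]$ is the one-sided directional derivative. (The graph models the execution of a deterministic Turing machine: vertices are machine configurations, edges are computation steps, vertices without outgoing edge are halting configurations.) *)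

From mathcomp Require Import all_boot all_order all_algebra.
From mathcomp Require Import all_classical all_reals topology normedtype.
Set Implicit Arguments. Unset Strict Implicit. Unset Printing Implicit Defensive.
Import Order.TTheory GRing.Theory Num.Theory numFieldNormedType.Exports.
Local Open Scope ring_scope.
Local Open Scope classical_set_scope.

Definition basisv (R : nzRingType) (V : finType) (v : V) : V -> R :=
  fun u => if u == v then 1 else 0.

Definition emu (R : nzRingType) (V : finType) (mu : R) (v w : V) : V -> R :=
  fun u => (1 - mu) * basisv R v u + mu * basisv R w u.

Definition inconv (R : realType) (V I : finType) (p : I -> V -> R) (x : V -> R) : Prop :=
  exists lam : I -> R, (forall i, 0 <= lam i) /\ \sum_i lam i = 1 /\
    forall u, x u = \sum_i lam i * p i u.

Definition simplexS (R : realType) (V : finType) (x : V -> R) : Prop :=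
  inconv (fun v : V => basisv R v) x.

(* the corner S_v^mu = conv ({e_v} u {e^mu_{vw} : w <> v}) (index w = v gives e_v) *)
Definition corner (R : realType) (V : finType) (mu : R) (v : V) (x : V -> R) : Prop :=
  inconv (fun w : V => if w == v then basisv R v else emu mu v w) x.

Definition affine_on (R : realType) (V : finType) (C : (V -> R) -> Prop)
  (l : (V -> R) -> R) : Prop :=
  forall x y t, C x -> C y -> 0 <= t <= 1 ->
    l (fun u => t * x u + (1 - t) * y u) = t * l x + (1 - t) * l y.

Definition dirderiv (R : realType) (V : finType) (l : (V -> R) -> R)
  (x d : V -> R) (L : R) : Prop :=
  (fun h : R => h^-1 * (l (fun u => x u + h * d u) - l x)) @ 0^'+ --> L.

Definition argminDir (R : realType) (V : finType) (l : (V -> R) -> R)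
  (x y : V -> R) : Prop :=
  simplexS y /\ exists L, dirderiv l x (fun u => y u - x u) L /\
    forall y', simplexS y' -> exists L', dirderiv l x (fun u => y' u - x u) L' /\ L <= L'.

Definition CGstep (R : realType) (V : finType) (l : (V -> R) -> R)
  (x y : V -> R) (a : R) (x' : V -> R) : Prop :=
  argminDir l x y /\ x' = (fun u => x u + a * (y u - x u)).

Definition linesearch (R : realType) (V : finType) (l : (V -> R) -> R)
  (x d : V -> R) (a : R) : Prop :=
  0 <= a /\ simplexS (fun u => x u + a * d u) /\
  forall a', 0 <= a' -> simplexS (fun u => x u + a' * d u) ->
    l (fun u => x u + a * d u) <= l (fun u => x u + a' * d u).

(* The function l is affine on every corner S_v^mu of the simplex.  Such an l
   is determined near e_v by the "corner costs" c u := l(e^mu_{vu}): on the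
   segment from e_v towards any y in S it is affine with slope
   mu^-1 (<y,c> - c v) (Jensen's equality for affine maps on a convex hull).
   Hence the one-sided directional derivative at e_v in direction y - e_v is
   that slope, and the linear-minimization step from e_v selects the vertex
   e_w where c attains a strict minimum.  With mu = 1/2, c v = w_v and
   c u = w_{vu}; conditions (i)-(v) make the successor of v (resp. v itself
   when v has no outgoing edge and edges decrease the weights) the strict
   minimizer.  An exact line search along an edge v -> w goes all the way to
   e_w because l decreases along the two half-segments meeting at the midpoint. *)

From mathcomp Require Import all_boot all_order all_algebra.
From mathcomp Require Import all_classical all_reals topology normedtype.
From mathcomp Require Import ring lra.
Import Order.TTheory GRing.Theory Num.Theory numFieldNormedType.Exports.
Local Open Scope ring_scope.
Set Implicit Arguments. Unset Strict Implicit.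

Section BasisVectors.
Variables (R : realType) (V : finType).

Lemma sum_basis (f : V -> R) u : \sum_i f i * basisv R i u = f u.
Proof.
rewrite (bigD1 u) //= /basisv eqxx mulr1 big1 ?addr0 // => i /negbTE.
by rewrite eq_sym => ->; rewrite mulr0.
Qed.

Lemma sum_basisL (f : V -> R) w : \sum_u basisv R w u * f u = f w.
Proof.
rewrite -[RHS](sum_basis f); apply: eq_bigr => u _.
by rewrite mulrC /basisv eq_sym.
Qed.

Lemma sum_basis1 (w : V) : \sum_u basisv R w u = 1.
Proof. by rewrite -[RHS](sum_basisL (fun _ => 1) w); apply: eq_bigr => u _; rewrite mulr1. Qed.

Lemma simplex_coord (y : V -> R) :
  simplexS y -> (forall u, 0 <= y u) /\ \sum_u y u = 1.
Proof.
case=> lam [lam0 [lam1 ylam]].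
by have -> : y = lam by apply: funext => u; rewrite ylam sum_basis.
Qed.

Lemma simplex_basis (w : V) : simplexS (basisv R w).
Proof.
exists (basisv R w); split; first by move=> i; rewrite /basisv; case: eqP.
by split; [exact: sum_basis1 | move=> u; rewrite sum_basis].
Qed.

Lemma concentrated_at_strict_min (c : V -> R) w (y : V -> R) :
  (forall u, u != w -> c w < c u) -> (forall u, 0 <= y u) -> \sum_u y u = 1 ->
  \sum_u y u * c u <= c w -> y = basisv R w.
Proof.
move=> cmin y0 y1 avg_le.
have excess_ge0 u : 0 <= y u * (c u - c w).
  apply: mulr_ge0 => //; have [->|uw] := eqVneq u w; first by rewrite subrr.
  by rewrite subr_ge0 ltW // cmin.
have excess0 : \sum_u y u * (c u - c w) = 0.
  apply/eqP; rewrite eq_le sumr_ge0 // andbT.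
  under eq_bigr do rewrite mulrBr.
  by rewrite sumrB -mulr_suml y1 mul1r subr_le0.
have off_w u : u != w -> y u = 0.
  move=> uw; have /eqP := psumr_eq0P (P := xpredT) (fun i _ => excess_ge0 i) excess0 (i := u) isT.
  rewrite mulf_eq0 subr_eq0 => /orP[/eqP //| /eqP cuw].
  by have := cmin u uw; rewrite cuw ltxx.
have yw : y w = 1.
  by move: y1; rewrite (bigD1 w) //= big1 ?addr0 // => i iw; rewrite off_w.
by apply: funext => u; rewrite /basisv; case: eqP => [->|/eqP/off_w].
Qed.

End BasisVectors.

Section ConvexCombinations.
Variables (R : realType) (I : finType).
Implicit Types (lam : I -> R) (f : I -> R).

Lemma weight_le1 lam a : (forall i, 0 <= lam i) -> \sum_i lam i = 1 -> lam a <= 1.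
Proof.
move=> lam0 <-; rewrite (bigD1 a) //= lerDl; exact: sumr_ge0.
Qed.

Lemma unit_weight lam a f : (forall i, 0 <= lam i) -> \sum_i lam i = 1 -> lam a = 1 ->
  \sum_i lam i * f i = f a.
Proof.
move=> lam0 lam1 la1.
have rest0 : \sum_(i | i != a) lam i = 0 by move: lam1; rewrite (bigD1 a) //= la1; lra.
have off_a := psumr_eq0P (fun j _ => lam0 j) rest0.
rewrite (bigD1 a) //= la1 mul1r big1 ?addr0 // => i ia; by rewrite off_a ?mul0r.
Qed.

Definition peel lam a i := if i == a then 0 else lam i / (1 - lam a).

Lemma peelE lam a f : lam a != 1 ->
  \sum_i lam i * f i = lam a * f a + (1 - lam a) * \sum_i peel lam a i * f i.
Proof.
move=> la1; have nz : 1 - lam a != 0 by rewrite subr_eq0 eq_sym.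
rewrite (bigD1 a) //= [X in (1 - lam a) * X](bigD1 a) //= /peel eqxx mul0r add0r mulr_sumr.
by congr (_ + _); apply: eq_bigr => i /negbTE ->; field.
Qed.

Lemma peel_weights lam a : (forall i, 0 <= lam i) -> \sum_i lam i = 1 -> lam a != 1 ->
  (forall i, 0 <= peel lam a i) /\ \sum_i peel lam a i = 1.
Proof.
move=> lam0 lam1 la1.
have gap : 0 < 1 - lam a by rewrite subr_gt0 lt_neqAle la1 (weight_le1 a lam0 lam1).
split=> [i|]; first by rewrite /peel; case: eqP => _; rewrite ?lexx // divr_ge0 // ltW.
have rest : \sum_(i | i != a) lam i = 1 - lam a by move: lam1; rewrite (bigD1 a) //=; lra.
rewrite (bigD1 a) //= /peel eqxx add0r -[RHS](divff (lt0r_neq0 gap)) -rest mulr_suml.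
by apply: eq_bigr => i /negbTE ->.
Qed.

Lemma peel_support lam a : lam a != 1 ->
  [set i | peel lam a i != 0] = [set i | lam i != 0] :\ a.
Proof.
move=> la1; have nz : 1 - lam a != 0 by rewrite subr_eq0 eq_sym.
apply/setP => i; rewrite !inE /peel.
have [->|ia] := eqVneq i a; first by rewrite eqxx.
by rewrite mulf_eq0 invr_eq0 (negbTE nz) orbF.
Qed.

Lemma affine_on_hull (V : finType) (p : I -> V -> R) (l : (V -> R) -> R) :
  affine_on (inconv p) l -> forall lam, (forall i, 0 <= lam i) -> \sum_i lam i = 1 ->
  l (fun t => \sum_i lam i * p i t) = \sum_i lam i * l (p i).
Proof.
move=> l_aff lam; move Hn : #|[set i | lam i != 0]| => n.
elim: n lam Hn => [|n IH] lam Hn lam0 lam1.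
  suff : \sum_i lam i = 0 by rewrite lam1 => /eqP; rewrite oner_eq0.
  apply: big1 => i _; apply/eqP/negPn/negP => li.
  by have := cards0_eq Hn; move/setP/(_ i); rewrite !inE li.
have [a] : exists a, a \in [set i | lam i != 0] by apply/set0Pn; rewrite -card_gt0 Hn.
rewrite inE => la0.
have [la1|la1] := eqVneq (lam a) 1.
  have -> : (fun t => \sum_i lam i * p i t) = p a.
    by apply: funext => t; rewrite (unit_weight (fun i => p i t) lam0 lam1 la1).
  by rewrite (unit_weight _ lam0 lam1 la1).
have [mu0 mu1] := peel_weights lam0 lam1 la1.
have card_mu : #|[set i | peel lam a i != 0]| = n.
  by move: Hn; rewrite peel_support // (cardsD1 a) inE la0 add1n => -[].
have mu_val := IH _ card_mu mu0 mu1.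
have vertex_in : inconv p (p a).
  exists (basisv R a); split; first by move=> i; rewrite /basisv; case: eqP.
  by split; [exact: sum_basis1 | move=> u; rewrite sum_basisL].
have -> : (fun t => \sum_i lam i * p i t) =
          (fun t => lam a * p a t + (1 - lam a) * \sum_i peel lam a i * p i t).
  by apply: funext => t; rewrite (peelE (fun i => p i t) la1).
rewrite l_aff //; last by rewrite lam0 weight_le1.
- by rewrite mu_val (peelE (fun i => l (p i)) la1).
- by exists (peel lam a).
Qed.

End ConvexCombinations.

Local Open Scope classical_set_scope.

Lemma cvg_right_eventually_const (R : realType) (g : R -> R) (c L : R) :
  0 < c -> (forall h, 0 < h -> h <= c -> g h = L) -> g @ 0^'+ --> L.
Proof.
move=> c0 gL; apply: cvg_trans (near_eq_cvg _) (cvg_cst L).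
near=> h; apply/esym/gL; near: h; [exact: nbhs_right_gt | exact: nbhs_right_le].
Unshelve. all: by end_near.
Qed.

Lemma dirderiv_unique (R : realType) (V : finType) (l : (V -> R) -> R) x d L1 L2 :
  dirderiv l x d L1 -> dirderiv l x d L2 -> L1 = L2.
Proof. by move=> dL1 dL2; apply: (cvg_unique _ dL1 dL2). Qed.

Lemma half_gt0 (R : numFieldType) : 0 < 2^-1 :> R.
Proof. by rewrite invr_gt0 ltr0n. Qed.

Section CornerModel.
Variables (R : realType) (V : finType) (l : (V -> R) -> R) (mu : R) (v : V) (c : V -> R).
Hypotheses (mu_gt0 : 0 < mu) (l_aff : affine_on (corner mu v) l)
  (l_c : forall u, l (emu mu v u) = c u).

Lemma emu_vv : emu mu v v = basisv R v.
Proof. by apply: funext => t; rewrite /emu -mulrDl subrK mul1r. Qed.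

Lemma corner_hull : corner mu v = inconv (emu mu v).
Proof.
congr inconv; apply: funext => w.
by have [->|//] := eqVneq w v; rewrite emu_vv.
Qed.

Lemma corner_base_value : l (basisv R v) = c v.
Proof. by rewrite -emu_vv l_c. Qed.

Lemma corner_segment (y : V -> R) (h : R) : simplexS y -> 0 <= h <= mu ->
  l (fun t => basisv R v t + h * (y t - basisv R v t)) =
    c v + h / mu * (\sum_u y u * c u - c v).
Proof.
move=> Sy /andP[h0 hmu]; have [y0 y1] := simplex_coord Sy.
have mu0 : mu != 0 by rewrite gt_eqF.
set s := h / mu; have s0 : 0 <= s by rewrite /s divr_ge0 // ltW.
have s1 : s <= 1 by rewrite /s ler_pdivrMr // mul1r.
pose lam u := basisv R v u + s * (y u - basisv R v u).
have lam0 u : 0 <= lam u.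
  by rewrite /lam /basisv; case: eqP => _; have := y0 u; nra.
have lam1 : \sum_u lam u = 1.
  by rewrite big_split /= -mulr_sumr sumrB y1 sum_basis1 subrr mulr0 addr0.
have -> : (fun t => basisv R v t + h * (y t - basisv R v t)) =
          (fun t => \sum_u lam u * emu mu v u t).
  apply: funext => t; rewrite /emu.
  under eq_bigr do rewrite mulrDr.
  rewrite big_split /= -mulr_suml lam1.
  under eq_bigr do rewrite mulrCA.
  by rewrite -mulr_sumr sum_basis /lam /s; field.
have l_hull : affine_on (inconv (emu mu v)) l by rewrite -corner_hull.
rewrite (affine_on_hull l_hull lam0 lam1).
under eq_bigr do rewrite l_c /lam mulrDl.
rewrite big_split /= sum_basisL.
under eq_bigr do rewrite -mulrA mulrBl.
by rewrite -mulr_sumr sumrB sum_basisL.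
Qed.

Lemma corner_dirderiv (y : V -> R) : simplexS y ->
  dirderiv l (basisv R v) (fun u => y u - basisv R v u)
    (mu^-1 * (\sum_u y u * c u - c v)).
Proof.
move=> Sy; apply: (cvg_right_eventually_const mu_gt0) => h h0 hmu.
rewrite (corner_segment Sy); last by rewrite (ltW h0).
rewrite corner_base_value addrAC subrr add0r.
by rewrite !mulrA mulVf ?mul1r // gt_eqF.
Qed.

Lemma corner_argmin (w : V) (y : V -> R) :
  (forall u, u != w -> c w < c u) -> argminDir l (basisv R v) y -> y = basisv R w.
Proof.
move=> cmin [Sy [L [dy ymin]]].
have [L' [dw LL']] := ymin _ (simplex_basis R w).
have [y0 y1] := simplex_coord Sy.
apply: (concentrated_at_strict_min cmin y0 y1).
move: LL'; rewrite (dirderiv_unique dy (corner_dirderiv Sy)).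
rewrite (dirderiv_unique dw (corner_dirderiv (simplex_basis R w))) sum_basisL.
by rewrite ler_pM2l ?invr_gt0 // lerD2r.
Qed.

End CornerModel.

(* Exact line search along an edge e_v -> e_w of the simplex goes all the way
   to e_w when l decreases strictly on both half-segments [e_v, m] and [m, e_w]
   meeting at the midpoint m, where l is affine on the corners of v and w. *)
Lemma linesearch_full_step (R : realType) (V : finType) (l : (V -> R) -> R)
    (v w : V) (cv cw : V -> R) (a : R) :
  v != w ->
  affine_on (corner 2^-1 v) l -> (forall u, l (emu 2^-1 v u) = cv u) ->
  affine_on (corner 2^-1 w) l -> (forall u, l (emu 2^-1 w u) = cw u) ->
  cv w = cw v -> cv w < cv v -> cw w < cw v ->
  linesearch l (basisv R v) (fun u => basisv R w u - basisv R v u) a -> a = 1.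
Proof.
move=> vw v_aff v_c w_aff w_c mid_eq v_dec w_dec [a0 [Sa amin]].
have a_le1 : a <= 1.
  have [/(_ v) + _] := simplex_coord Sa.
  by rewrite /basisv eqxx (negbTE vw); lra.
have reach_w : (fun u => basisv R v u + 1 * (basisv R w u - basisv R v u)) = basisv R w.
  by apply: funext => u; rewrite mul1r addrC subrK.
have := amin 1 ler01; rewrite reach_w (corner_base_value w_c).
move=> /(_ (simplex_basis R w)); have [a_half|half_a] := lerP a 2^-1.
  rewrite (corner_segment (@half_gt0 R) v_aff v_c (simplex_basis R w)) ?a0 //.
  by rewrite sum_basisL invrK mid_eq; nra.
have [//|a_ne1] := eqVneq a 1; have a_lt1 : a < 1 by rewrite lt_neqAle a_ne1.
have from_w : (fun u => basisv R v u + a * (basisv R w u - basisv R v u)) =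
              (fun u => basisv R w u + (1 - a) * (basisv R v u - basisv R w u)).
  by apply: funext => u; ring.
rewrite from_w (corner_segment (@half_gt0 R) w_aff w_c (simplex_basis R v)); last lra.
by rewrite sum_basisL invrK; nra.
Qed.

Section WalkGraph.
Variables (R : realType) (V : finType) (E : rel V) (w1 : V -> R) (w2 : V -> V -> R) (B : R).
Hypotheses (no_loop : forall v, ~~ E v v)
  (out_unique : forall v w w', E v w -> E v w' -> w = w')
  (edge_below_source : forall v w, E v w -> w2 v w < w1 v)
  (edges_decrease : forall u v w, E u v -> E v w -> w2 v w < w2 u v)
  (far_is_B : forall v w, v != w -> ~~ E v w -> ~~ E w v -> w2 v w = B)
  (w2_sym : forall v w, v != w -> w2 v w = w2 w v)
  (vertex_below_B : forall v, w1 v < B) (edge_below_B : forall v w, E v w -> w2 v w < B).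

Definition cost (v u : V) : R := if u == v then w1 v else w2 v u.

Lemma edge_neq v w : E v w -> v != w.
Proof. by move=> vw; apply/eqP => v_eq_w; move: vw; rewrite v_eq_w (negbTE (no_loop w)). Qed.

Lemma cost_edge v w : E v w -> cost v w = w2 v w.
Proof. by move=> vw; rewrite /cost eq_sym (negbTE (edge_neq vw)). Qed.

Lemma cost_successor_min v w : E v w -> forall u, u != w -> cost v w < cost v u.
Proof.
move=> vw u uw; rewrite (cost_edge vw) /cost.
have [_|uv] := eqVneq u v; first exact: edge_below_source.
case vu: (E v u); first by move: uw; rewrite (out_unique vu vw) eqxx.
case uv': (E u v); first by rewrite [w2 v u]w2_sym ?(edges_decrease uv' vw) // eq_sym.
have -> : w2 v u = B by apply: far_is_B; rewrite ?vu ?uv' // eq_sym.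
exact: edge_below_B.
Qed.

Lemma cost_terminal_min v : (forall w, ~~ E v w) -> (forall u, E u v -> w1 v < w2 u v) ->
  forall u, u != v -> cost v v < cost v u.
Proof.
move=> no_out in_above u uv; rewrite /cost eqxx (negbTE uv).
have vu := negbTE (no_out u).
case uv': (E u v); first by rewrite [w2 v u]w2_sym ?in_above // eq_sym.
have -> : w2 v u = B by apply: far_is_B; rewrite ?vu ?uv' // eq_sym.
exact: vertex_below_B.
Qed.

Variable l : (V -> R) -> R.
Hypotheses (l_vertex : forall v, l (basisv R v) = w1 v)
  (l_mid : forall v w, v != w -> l (fun u => 2^-1 * (basisv R v u + basisv R w u)) = w2 v w)
  (l_aff : forall v, affine_on (corner 2^-1 v) l).

Lemma l_corner_cost v u : l (emu 2^-1 v u) = cost v u.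
Proof.
rewrite /cost; have [->|uv] := eqVneq u v; first by rewrite emu_vv l_vertex.
rewrite -l_mid 1?eq_sym //; congr l; apply: funext => t; by rewrite /emu; field.
Qed.

Lemma argmin_successor v w y : E v w -> argminDir l (basisv R v) y -> y = basisv R w.
Proof.
move=> vw; apply: (corner_argmin (@half_gt0 R) (@l_aff v) (l_corner_cost v)).
exact: cost_successor_min.
Qed.

Lemma argmin_terminal v y : (forall w, ~~ E v w) -> (forall u, E u v -> w1 v < w2 u v) ->
  argminDir l (basisv R v) y -> y = basisv R v.
Proof.
move=> no_out in_above; apply: (corner_argmin (@half_gt0 R) (@l_aff v) (l_corner_cost v)).
exact: cost_terminal_min.
Qed.

Lemma linesearch_edge v w a : E v w -> w1 w < w2 v w ->
  linesearch l (basisv R v) (fun u => basisv R w u - basisv R v u) a -> a = 1.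
Proof.
move=> vw w_below; have v_ne_w := edge_neq vw.
apply: (linesearch_full_step v_ne_w (@l_aff v) (l_corner_cost v) (@l_aff w) (l_corner_cost w)).
- by rewrite cost_edge // /cost (negbTE v_ne_w) w2_sym.
- by rewrite cost_edge // /cost eqxx edge_below_source.
- by rewrite /cost eqxx (negbTE v_ne_w) -w2_sym.
Qed.

Variables (K : nat) (vs : nat -> V).
Hypotheses (walk_edge : forall k, (k < K)%N -> E (vs k) (vs k.+1))
  (walk_end : forall w, ~~ E (vs K) w).

Lemma unit_steps_follow_walk (x y : nat -> V -> R) :
  x 0%N = basisv R (vs 0%N) -> (forall k, (k < K)%N -> CGstep l (x k) (y k) 1 (x k.+1)) ->
  forall k, (k <= K)%N -> x k = basisv R (vs k).
Proof.
move=> x0 steps; elim=> [//|k IH] kK.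
have [ymin ->] := steps k kK; rewrite IH 1?ltnW // in ymin *.
rewrite (argmin_successor (walk_edge kK) ymin).
by apply: funext => u; rewrite mul1r addrC subrK.
Qed.

Hypothesis edge_descent : forall v w, E v w -> w2 v w < w1 v /\ w1 w < w2 v w.

Lemma step_follows_walk k y a x' : (k < K)%N ->
  CGstep l (basisv R (vs k)) y a x' ->
  a = 1 \/ linesearch l (basisv R (vs k)) (fun u => y u - basisv R (vs k) u) a ->
  x' = basisv R (vs k.+1).
Proof.
move=> kK [ymin ->] step_rule; have yk := argmin_successor (walk_edge kK) ymin.
have a1 : a = 1.
  case: step_rule => // /=; rewrite yk.
  exact: linesearch_edge (walk_edge kK) (edge_descent (walk_edge kK)).2.
by rewrite yk a1; apply: funext => u; rewrite mul1r addrC subrK.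
Qed.

Lemma step_at_walk_end y a x' : CGstep l (basisv R (vs K)) y a x' -> x' = basisv R (vs K).
Proof.
have in_above u : E u (vs K) -> w1 (vs K) < w2 u (vs K) by move/edge_descent => [].
move=> [/(argmin_terminal walk_end in_above) -> ->].
by apply: funext => u; rewrite subrr mulr0 addr0.
Qed.

Lemma iterates_follow_walk (x y : nat -> V -> R) (a : nat -> R) :
  x 0%N = basisv R (vs 0%N) -> (forall k, CGstep l (x k) (y k) (a k) (x k.+1)) ->
  (forall k, a k = 1) \/ (forall k, linesearch l (x k) (fun u => y k u - x k u) (a k)) ->
  forall k, x k = basisv R (vs (minn k K)).
Proof.
move=> x0 steps step_rule; elim=> [|k IH]; first by rewrite x0 min0n.
have [kK|Kk] := ltnP k K; last first.
  have xk : x k = basisv R (vs K) by rewrite IH (minn_idPr Kk).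
  by rewrite (minn_idPr (leqW Kk)); apply: step_at_walk_end; rewrite -xk.
have xk : x k = basisv R (vs k) by rewrite IH (minn_idPl (ltnW kK)).
have step_k := steps k; rewrite xk in step_k.
rewrite (minn_idPl kK); apply: step_follows_walk kK step_k _.
by case: step_rule => [a1|ls]; [left | right; rewrite -xk].
Qed.

End WalkGraph.

Local Close Scope classical_set_scope.
Unset Implicit Arguments.

Theorem mainTheorem2 (R : realType) (V : finType) (E : rel V)
  (w1 : V -> R) (w2 : V -> V -> R) (B : R) (l : (V -> R) -> R)
  (K : nat) (vs : nat -> V) :
  (* no self loops, at most one outgoing edge *)
  (forall v, ~~ E v v) ->
  (forall v w w', E v w -> E v w' -> w = w') ->
  (* (i) - (v) *)
  (forall v w, E v w -> w2 v w < w1 v) ->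
  (forall u v w, E u v -> E v w -> w2 v w < w2 u v) ->
  (forall v w, v != w -> ~~ E v w -> ~~ E w v -> w2 v w = B) ->
  (forall v w, v != w -> w2 v w = w2 w v) ->
  (forall v, w1 v < B) -> (forall v w, E v w -> w2 v w < B) ->
  (* the function l *)
  (forall v, l (basisv R v) = w1 v) ->
  (forall v w, v != w -> l (fun u => 2^-1 * (basisv R v u + basisv R w u)) = w2 v w) ->
  (forall v, affine_on (corner 2^-1 v) l) ->
  (* the path *)
  (forall k, (k < K)%N -> E (vs k) (vs k.+1)) ->
  (forall w, ~~ E (vs K) w) ->
  (* (a) constant step 1 *)
  (forall (x y : nat -> V -> R),
     x 0%N = basisv R (vs 0%N) ->
     (forall k, (k < K)%N -> CGstep l (x k) (y k) 1 (x k.+1)) ->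
     (forall k, (k < K)%N -> forall y1 y2,
        argminDir l (x k) y1 -> argminDir l (x k) y2 -> y1 = y2) /\
     (forall k, (k <= K)%N -> x k = basisv R (vs k)))
  /\
  (* (b) *)
  ((forall v w, E v w -> w1 v > w2 v w /\ w2 v w > w1 w) ->
   forall (x y : nat -> V -> R) (a : nat -> R),
     x 0%N = basisv R (vs 0%N) ->
     (forall k, CGstep l (x k) (y k) (a k) (x k.+1)) ->
     ((forall k, a k = 1) \/
      (forall k, linesearch l (x k) (fun u => y k u - x k u) (a k))) ->
     (forall k, (k <= K)%N -> x k = basisv R (vs k)) /\
     (forall k, (K < k)%N -> x k = basisv R (vs K)) /\
     (forall k, l (x k) = w1 (vs (minn k K))) /\
     (forall k, (k < K)%N -> w1 (vs k) > w1 (vs k.+1))).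
Proof.
move=> no_loop out_unique below_source decrease far_B w2_sym vertex_below_B edge_below_B
  l_vertex l_mid l_aff walk_edge walk_end.
have succ := argmin_successor no_loop out_unique below_source decrease far_B w2_sym
  edge_below_B l_vertex l_mid l_aff.
split=> [x y x0 steps | descent x y a x0 steps step_rule].
  have on_walk := unit_steps_follow_walk no_loop out_unique below_source decrease far_B
    w2_sym edge_below_B l_vertex l_mid l_aff walk_edge x0 steps.
  split=> // k kK y1 y2; rewrite on_walk 1?ltnW //.
  by move=> /(succ _ _ _ (walk_edge k kK)) -> /(succ _ _ _ (walk_edge k kK)) ->.
have xk := iterates_follow_walk no_loop out_unique below_source decrease far_B w2_sym
  vertex_below_B edge_below_B l_vertex l_mid l_aff walk_edge walk_end descent x0 steps step_rule.
split; [|split; [|split]].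
- by move=> k kK; rewrite xk (minn_idPl kK).
- by move=> k Kk; rewrite xk (minn_idPr (ltnW Kk)).
- by move=> k; rewrite xk l_vertex.
- move=> k kK; have [w2_lt w1_lt] := descent _ _ (walk_edge k kK).
  exact: lt_trans w1_lt w2_lt.
Qed.
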